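(* Let $f:\mathbb{N}\to\mathbb{R}$ with $f(1)=1$ be multiplicative, i.e. $f(mn)=f(m)f(n)$ for all coprime $m,n$. Assume there exist $C>0$ and $\gamma\in\mathbb{R}$ such that $|f(n)|\leq C n^\gamma$ for all $n\geq2$. Then $$|f^{-1}(n)| \leq \left(\frac{C}{C+1}\right)^{\omega(n)} (C+1)^{\Omega(n)} n^{\gamma}, \quad n\geq 2.$$
   Context: $f^{-1}$ denotes the Dirichlet inverse of $f$: the arithmetic function with $\sum_{d\mid n} f(n/d) f^{-1}(d)=\varepsilon(n)$ for all $n$, where $\varepsilon(1)=1$ and $\varepsilon(n)=0$ for $n\ge2$. $\omega(n)$ is the number of distinct prime factors of $n$ and $\Omega(n)$ the number of prime factors counted with multiplicity. *)

From mathcomp Require Import all_boot all_order all_algebra.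
From mathcomp Require Import all_classical all_reals all_analysis.
Set Implicit Arguments. Unset Strict Implicit. Unset Printing Implicit Defensive.
Import Order.TTheory GRing.Theory Num.Theory.
Local Open Scope ring_scope.

(* Arithmetic functions are modeled as f : nat -> R; only values at n >= 1 matter. *)

Definition mult_arith (R : realType) (f : nat -> R) : Prop :=
  f 1%N = 1 /\ forall m n : nat, coprime m n -> f (m * n)%N = f m * f n.

Definition dirichlet_inverse (R : realType) (f g : nat -> R) : Prop :=
  forall n : nat, (0 < n)%N ->
    \sum_(d <- divisors n) f (n %/ d)%N * g d = (n == 1%N)%:R.

Definition omega (n : nat) : nat := size (primes n).
Definition Omega (n : nat) : nat := (\sum_(p <- primes n) logn p n)%N.

From mathcomp Require Import all_boot all_order all_algebra.
From mathcomp Require Import all_classical all_reals all_analysis.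
From mathcomp Require Import zify ring.
Set Implicit Arguments. Unset Strict Implicit. Unset Printing Implicit Defensive.
Import Order.TTheory GRing.Theory Num.Theory.
Local Open Scope ring_scope.

(* The Dirichlet inverse g of a multiplicative f is multiplicative, and so is
   the claimed bound B(n) = (C/(C+1))^omega(n) (C+1)^Omega(n) n^gamma; hence it
   suffices to bound g on prime powers, where B(p^k) = c_k p^(k gamma) with
   c_0 = 1 and c_k = C (C+1)^(k-1).  Solving the defining identity at p^(k+1)
   for its last term gives g(p^(k+1)) = - sum_(j <= k) f(p^(k+1-j)) g(p^j), and
   by induction |g(p^(k+1))| <= C p^((k+1) gamma) sum_(j <= k) c_j, where the
   sum telescopes to (C+1)^k. *)

Lemma mult_arith_pos (R : realType) (g : nat -> R) : g 1%N = 1 ->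
    (forall m n, coprime m n -> (0 < m)%N -> (0 < n)%N -> g (m * n)%N = g m * g n) ->
  mult_arith g.
Proof.
move=> g1 gM; split=> // -[|m] [|n] co; try exact: gM.
  by move: co; rewrite /coprime gcd0n => /eqP->; rewrite g1 mulr1.
by move: co; rewrite /coprime gcdn0 => /eqP->; rewrite g1 mul1r.
Qed.

Lemma mult_arith_norm_le (R : realType) (g h : nat -> R) :
    mult_arith g -> mult_arith h ->
    (forall p k, prime p -> (0 < k)%N -> `|g (p ^ k)%N| <= h (p ^ k)%N) ->
  forall n, (0 < n)%N -> `|g n| <= h n.
Proof.
move=> [g1 gM] [h1 hM] le_pfactor; elim/ltn_ind => n IH n0.
have [n_le1|n_gt1] := leqP n 1.
  by rewrite (_ : n = 1%N) ?g1 ?h1 ?normr1 //; lia.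
have p_pr := pdiv_prime n_gt1; set p := pdiv n in p_pr *.
have [m co n_eq] := pfactor_coprime p_pr n0; set k := logn p n in n_eq.
have k0 : (0 < k)%N by rewrite logn_gt0 mem_primes p_pr n0 pdiv_dvd.
have m0 : (0 < m)%N by move: n0; rewrite n_eq muln_gt0 => /andP[].
have m_lt : (m < n)%N.
  by rewrite n_eq -{1}(muln1 m) ltn_pmul2l // -(expn0 p) ltn_exp2l ?prime_gt1.
have co' : coprime m (p ^ k) by rewrite coprime_sym coprime_pexpl.
rewrite n_eq gM // hM // normrM.
by apply: ler_pM => //; [apply: IH | apply: le_pfactor].
Qed.

Lemma big_seq_single (V : nmodType) (I : eqType) (i : I) (s : seq I) (F : I -> V) :
  uniq s -> i \in s -> (forall j, j \in s -> j != i -> F j = 0) ->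
  \sum_(j <- s) F j = F i.
Proof.
move=> s_uniq si F0; rewrite (bigD1_seq i) //= big1_seq ?addr0 // => j /andP[ji js].
exact: F0.
Qed.

Lemma gcdn_coprime_divisorsM m n d1 d2 : coprime m n -> (d1 %| m)%N -> (d2 %| n)%N ->
  gcdn (d1 * d2) m = d1.
Proof.
move=> co d1m d2n; rewrite gcdnC Gauss_gcdl; first exact/gcdn_idPr.
exact: coprime_dvdr d2n co.
Qed.

Lemma coprime_divisor_gcdM m n d : coprime m n -> (d %| m * n)%N ->
  d = (gcdn d m * gcdn d n)%N.
Proof.
move=> co dmn; apply/eqP; rewrite eqn_dvd; apply/andP; split.
  have d_gcdn : (d %| gcdn d m * n)%N by rewrite muln_gcdl dvdn_gcd dvdn_mulr.
  by rewrite muln_gcdr dvdn_gcd d_gcdn dvdn_mull.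
rewrite Gauss_dvd ?dvdn_gcdl //.
by apply: (coprime_dvdl (dvdn_gcdr _ _)); apply: (coprime_dvdr (dvdn_gcdr _ _)).
Qed.

Lemma perm_divisorsM m n : coprime m n -> (0 < m)%N -> (0 < n)%N ->
  perm_eq (divisors (m * n)) [seq (d1 * d2)%N | d1 <- divisors m, d2 <- divisors n].
Proof.
move=> co m0 n0; have mn0 : (0 < m * n)%N by rewrite muln_gt0 m0 n0.
apply: uniq_perm; rewrite ?divisors_uniq //.
  apply: allpairs_uniq; rewrite ?divisors_uniq // => -[a1 a2] [b1 b2].
  move=> /allpairsP[[x1 x2] /= [+ + [-> ->]]] /allpairsP[[y1 y2] /= [+ + [-> ->]]].
  rewrite -!dvdn_divisors // => x1m x2n y1m y2n /= E.
  have co' : coprime n m by rewrite coprime_sym.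
  congr pair.
    by rewrite -(gcdn_coprime_divisorsM co x1m x2n) E (gcdn_coprime_divisorsM co y1m y2n).
  rewrite -(gcdn_coprime_divisorsM co' x2n x1m) -(gcdn_coprime_divisorsM co' y2n y1m).
  by rewrite mulnC E mulnC.
move=> d; rewrite -dvdn_divisors //; apply/idP/allpairsP => [dmn|].
  exists (gcdn d m, gcdn d n); rewrite -!dvdn_divisors // !dvdn_gcdr.
  by split=> //; apply: coprime_divisor_gcdM.
by move=> [[x1 x2] /= []]; rewrite -!dvdn_divisors // => x1m x2n ->; apply: dvdn_mul.
Qed.

Lemma perm_divisors_pfactor p k : prime p ->
  perm_eq (divisors (p ^ k)) [seq (p ^ j)%N | j <- index_iota 0 k.+1].
Proof.
move=> p_pr; have p_gt1 := prime_gt1 p_pr.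
apply: uniq_perm; rewrite ?divisors_uniq ?(map_inj_uniq (expnI p_gt1)) ?iota_uniq //.
move=> d; rewrite -dvdn_divisors ?expn_gt0 ?prime_gt0 //.
by apply/dvdn_pfactor/mapP => // -[j jk ->]; exists j; rewrite // mem_index_iota in jk *.
Qed.

Lemma dirichlet_sum_coprimeM (R : realType) (f g : nat -> R) m n :
    mult_arith f -> coprime m n -> (0 < m)%N -> (0 < n)%N ->
  \sum_(d <- divisors (m * n)) f ((m * n) %/ d)%N * g d =
  \sum_(d1 <- divisors m) \sum_(d2 <- divisors n)
    f (m %/ d1)%N * f (n %/ d2)%N * g (d1 * d2)%N.
Proof.
move=> [_ fM] co m0 n0; rewrite (perm_big _ (perm_divisorsM co m0 n0)) big_allpairs_dep.
apply: eq_big_seq => d1; rewrite -dvdn_divisors // => d1m.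
apply: eq_big_seq => d2; rewrite -dvdn_divisors // => d2n.
rewrite -fM; last exact: coprime_dvdl (dvdn_div d1m) (coprime_dvdr (dvdn_div d2n) co).
by rewrite divn_mulAC // muln_divA // divnMA divnAC.
Qed.

Definition inverse_pfactor_coef (R : comNzRingType) (C : R) (k : nat) : R :=
  if k is k'.+1 then C * (C + 1) ^+ k' else 1.

Lemma sum_inverse_pfactor_coef (R : comNzRingType) (C : R) k :
  \sum_(j < k.+1) inverse_pfactor_coef C j = (C + 1) ^+ k.
Proof.
elim: k => [|k IH]; first by rewrite big_ord1 expr0.
by rewrite big_ord_recr /= IH exprS; ring.
Qed.

Section DirichletInverse.

Variables (R : realType) (f g : nat -> R).
Hypotheses (f_mult : mult_arith f) (g_inv : dirichlet_inverse f g).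

Lemma dirichlet_inverse1 : g 1%N = 1.
Proof.
have := g_inv (isT : 0 < 1)%N; rewrite (_ : divisors 1 = [:: 1%N]) // big_seq1 divn1.
by case: f_mult => -> _; rewrite mul1r.
Qed.

Lemma sum_dirichlet_inverse_defect m n : coprime m n -> (1 < m)%N -> (0 < n)%N ->
  \sum_(d1 <- divisors m) \sum_(d2 <- divisors n)
    f (m %/ d1)%N * f (n %/ d2)%N * (g (d1 * d2)%N - g d1 * g d2) = 0.
Proof.
move=> co m_gt1 n0; have m0 := ltnW m_gt1.
under eq_bigr => d1 _ do under eq_bigr => d2 _ do rewrite mulrBr.
under eq_bigr => d1 _ do rewrite sumrB.
rewrite sumrB -dirichlet_sum_coprimeM // g_inv ?muln_gt0 ?m0 //.
rewrite (eq_bigr (fun d1 => f (m %/ d1)%N * g d1 *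
                            \sum_(d2 <- divisors n) f (n %/ d2)%N * g d2)); last first.
  by move=> d1 _; rewrite big_distrr; apply: eq_bigr => d2 _; rewrite mulrACA.
rewrite -big_distrl /= !g_inv // (_ : (m == 1)%N = false) ?mul0r; last lia.
by rewrite (_ : (m * n == 1)%N = false) ?subrr //; lia.
Qed.

Lemma dirichlet_inverse_mult : mult_arith g.
Proof.
apply: mult_arith_pos; first exact: dirichlet_inverse1.
move=> m n; have [N] := ubnP (m * n)%N; elim: N m n => // N IH m n mnN co m0 n0.
have [m_le1|m_gt1] := leqP m 1.
  by rewrite (_ : m = 1%N) ?mul1n ?dirichlet_inverse1 ?mul1r //; lia.
have [n_le1|n_gt1] := leqP n 1.
  by rewrite (_ : n = 1%N) ?muln1 ?dirichlet_inverse1 ?mulr1 //; lia.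
set F := fun d1 d2 => f (m %/ d1)%N * f (n %/ d2)%N * (g (d1 * d2)%N - g d1 * g d2).
(* By induction every term of the vanishing double sum is 0, except the one at (m, n). *)
have F0 d1 d2 : d1 \in divisors m -> d2 \in divisors n -> (d1 != m) || (d2 != n) ->
    F d1 d2 = 0.
  rewrite -!dvdn_divisors // => d1m d2n ne.
  have lt : (d1 * d2 < m * n)%N.
    by have := dvdn_leq m0 d1m; have := dvdn_leq n0 d2n; move: ne => /orP[] /eqP; nia.
  rewrite /F IH ?subrr ?mulr0 //; first lia.
  - exact: coprime_dvdl d1m (coprime_dvdr d2n co).
  - exact: dvdn_gt0 m0 d1m.
  - exact: dvdn_gt0 n0 d2n.
have defect : \sum_(d1 <- divisors m) \sum_(d2 <- divisors n) F d1 d2 = 0.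
  exact: sum_dirichlet_inverse_defect.
apply/eqP; rewrite -subr_eq0 -defect.
rewrite (big_seq_single (i := m)) ?divisors_uniq ?divisors_id //; last first.
  by move=> d1 d1m ne; apply: big1_seq => d2 d2n; rewrite F0 ?ne.
rewrite (big_seq_single (i := n)) ?divisors_uniq ?divisors_id //; last first.
  by move=> d2 d2n ne; rewrite F0 ?divisors_id ?ne ?orbT.
by case: f_mult => f1 _; rewrite /F !divnn m0 n0 f1 !mul1r.
Qed.

Lemma dirichlet_inverse_pfactor p k : prime p ->
  g (p ^ k.+1)%N = - \sum_(j < k.+1) f (p ^ (k.+1 - j))%N * g (p ^ j)%N.
Proof.
move=> p_pr; have p_gt0 := prime_gt0 p_pr; case: (f_mult) => f1 _.
have pk_gt1 : (1 < p ^ k.+1)%N by rewrite -(expn0 p) ltn_exp2l ?prime_gt1.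
have := g_inv (ltnW pk_gt1).
rewrite (perm_big _ (perm_divisors_pfactor k.+1 p_pr)) big_map big_nat_recr //=.
rewrite divnn expn_gt0 p_gt0 f1 mul1r gtn_eqF // => /eqP.
rewrite addrC addr_eq0 => /eqP->; congr (- _).
by rewrite big_mkord; apply: eq_bigr => -[j /= jk] _; rewrite expnB // ltnW.
Qed.

Lemma dirichlet_inverse_pfactor_bound (C gamma : R) p : prime p ->
    (forall k, (0 < k)%N -> `|f (p ^ k)%N| <= C * (p ^ k)%:R `^ gamma) ->
  forall k, `|g (p ^ k)%N| <= inverse_pfactor_coef C k * (p ^ k)%:R `^ gamma.
Proof.
move=> p_pr f_bound; elim/ltn_ind => -[|k] IH.
  by rewrite expn0 dirichlet_inverse1 powR1 mul1r normr1.
rewrite dirichlet_inverse_pfactor // normrN.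
apply: le_trans (ler_norm_sum _ _ _) _.
apply: (@le_trans _ _
  (\sum_(j < k.+1) C * inverse_pfactor_coef C j * (p ^ k.+1)%:R `^ gamma)).
  apply: ler_sum => -[j /= jk] _.
  have pk_split : (p ^ k.+1 = p ^ (k.+1 - j) * p ^ j)%N by rewrite -expnD subnK // ltnW.
  rewrite normrM [in X in _ <= X]pk_split natrM powRM // mulrACA.
  by apply: ler_pM => //; [apply: f_bound; rewrite subn_gt0 | apply: IH].
by rewrite -big_distrl -big_distrr /= sum_inverse_pfactor_coef mulrC.
Qed.

End DirichletInverse.

Lemma perm_primesM m n : coprime m n -> (0 < m)%N -> (0 < n)%N ->
  perm_eq (primes (m * n)) (primes m ++ primes n).
Proof.
move=> co m0 n0; apply: uniq_perm => [||q]; rewrite ?primes_uniq ?mem_cat ?primesM //.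
by rewrite cat_uniq !primes_uniq andbT -coprime_has_primes // coprime_sym.
Qed.

Lemma omegaM m n : coprime m n -> (0 < m)%N -> (0 < n)%N ->
  omega (m * n) = (omega m + omega n)%N.
Proof. by move=> co m0 n0; rewrite /omega (perm_size (perm_primesM co m0 n0)) size_cat. Qed.

Lemma OmegaM m n : coprime m n -> (0 < m)%N -> (0 < n)%N ->
  Omega (m * n) = (Omega m + Omega n)%N.
Proof.
move=> co m0 n0; rewrite /Omega (perm_big _ (perm_primesM co m0 n0)) big_cat /=.
have logn_other a b q : coprime a b -> q \in primes a -> logn q b = 0%N.
  move=> co_ab; rewrite mem_primes => /and3P[_ _ qa].
  exact/logn_coprime/(coprime_dvdl qa co_ab).
congr addn; apply: eq_big_seq => q q_pr; rewrite lognM //.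
  by rewrite (logn_other m n) ?addn0.
by rewrite (logn_other n m) // coprime_sym.
Qed.

Lemma omega_pfactor p k : prime p -> (0 < k)%N -> omega (p ^ k) = 1%N.
Proof. by move=> p_pr k0; rewrite /omega primesX // primes_prime. Qed.

Lemma Omega_pfactor p k : prime p -> (0 < k)%N -> Omega (p ^ k) = k.
Proof. by move=> p_pr k0; rewrite /Omega primesX // primes_prime // big_seq1 pfactorK. Qed.

Definition inverse_bound (R : realType) (C gamma : R) (n : nat) : R :=
  (C / (C + 1)) ^+ omega n * (C + 1) ^+ Omega n * n%:R `^ gamma.

Lemma inverse_bound_mult (R : realType) (C gamma : R) : mult_arith (inverse_bound C gamma).
Proof.
apply: mult_arith_pos => [|m n co m0 n0].
  by rewrite /inverse_bound /omega /Omega (_ : primes 1 = [::]) // big_nil powR1 !expr0 !mul1r.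
by rewrite /inverse_bound omegaM // OmegaM // natrM powRM // !exprD; ring.
Qed.

Lemma inverse_bound_pfactor (R : realType) (C gamma : R) p k : C + 1 != 0 -> prime p ->
  inverse_bound C gamma (p ^ k) = inverse_pfactor_coef C k * (p ^ k)%:R `^ gamma.
Proof.
move=> C1 p_pr; case: k => [|k].
  by rewrite expn0 (inverse_bound_mult C gamma).1 powR1 mulr1.
rewrite /inverse_bound omega_pfactor // Omega_pfactor // expr1 exprS /=.
by rewrite mulrA divfK.
Qed.

Theorem proposition3p2 (R : realType) (f finv : nat -> R) (C gamma : R) :
  mult_arith f ->
  dirichlet_inverse f finv ->
  0 < C ->
  (forall n : nat, (2 <= n)%N -> `|f n| <= C * (n%:R `^ gamma)) ->
  forall n : nat, (2 <= n)%N ->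
    `|finv n| <= (C / (C + 1)) ^+ omega n * (C + 1) ^+ Omega n * (n%:R `^ gamma).
Proof.
move=> f_mult finv_inv C_gt0 f_bound n n_ge2.
have C1_neq0 : C + 1 != 0 by rewrite gt_eqF // addr_gt0.
apply: (mult_arith_norm_le (dirichlet_inverse_mult f_mult finv_inv)
                           (inverse_bound_mult C gamma)); last lia.
move=> p k p_pr k_gt0; rewrite inverse_bound_pfactor //.
apply: (dirichlet_inverse_pfactor_bound f_mult finv_inv) => // j j_gt0.
apply: f_bound; rewrite (leq_trans (prime_gt1 p_pr)) //.
by rewrite -{1}(expn1 p) leq_exp2l ?prime_gt1.
Qed.
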